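(* Let $\mathcal S$ be a trajectory set satisfying $\bar\sigma(0)\ge0$. Then the hedging price integral in the sense of Leinert $\int_{(L)}:\mathcal L^1_{(L)}\to\mathbb R$ is linear, positive (i.e. $\int_{(L)}f\ge0$ whenever $f\in\mathcal L^1_{(L)}$ and $f\ge0$ on $\mathcal S$), continuous with respect to $\|\cdot\|$, and constant-preserving (i.e. $\int_{(L)}c=c$ for every constant function $c\in\mathbb R$).
   Context: Fix $s_0\in\mathbb R$. A trajectory set is any set $\mathcal S$ of real sequences $S=(S_j)_{j\in\mathbb N_0}$ with $S_0=s_0$. A simple portfolio $(V,n,H)$ consists of $V\in\mathbb R$, $n\in\mathbb N$ and nonanticipating functions $H_i:\mathcal S\to\mathbb R$, $0\le i\le n-1$ (i.e. $H_i(S)=h_i(S_0,\dots,S_i)$ for some arbitrary $h_i:\mathbb R^{i+1}\to\mathbb R$). Its wealth is $\Pi^{V,n,H}_j(S)=V+\sum_{i=0}^{\min\{j,n\}-1}H_i(S)(S_{i+1}-S_i)$ and $\Pi^{V,n,H}_\infty:=\Pi^{V,n,H}_n$; it is positive if $V\ge0$ and $\Pi^{V,n,H}_\infty\ge0$ on $\mathcal S$. A generalized portfolio is a sequence $(V_m,n_m,H_m)_{m\in\mathbb N_0}$ of simple portfolios, positive for every $m\ge1$; it is a positive generalized portfolio if moreover $\Pi^{V_0,n_0,H_0}_j\equiv0$ for all $j$. A map $f:\mathcal S\to[-\infty,+\infty]$ is superhedged with initial endowment $V=\sum_{m=0}^\infty V_m\in(-\infty,+\infty]$ by such a portfolio if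 $f\le\sum_{m=0}^\infty\Pi^{V_m,n_m,H_m}_\infty$ on $\mathcal S$. For $f\ge0$, $\bar I(f)$ is the infimum of initial endowments of positive generalized portfolios superhedging $f$; $\bar\sigma(f)$ is the infimum of initial endowments of generalized portfolios superhedging $f$. Let $\mathcal E=\{\Pi^{V,n,H}_\infty\}$ (over all simple portfolios). Under $\bar\sigma(0)\ge0$, the map $I(\Pi^{V,n,H}_\infty):=V$ is a well-defined linear functional on $\mathcal E$. Define $\|f\|:=\bar I(|f|)$ for $f:\mathcal S\to[-\infty,+\infty]$; let $\mathcal F$ be the space of real-valued $f$ with $\|f\|<\infty$ (a complete seminormed space) and $\mathcal E'=\{f\in\mathcal E:\|f\|<\infty\}$. Under $\bar\sigma(0)\ge0$, $I$ restricted to $\mathcal E'$ is continuous for $\|\cdot\|$; $\mathcal L^1_{(L)}$ denotes the closure of $\mathcal E'$ in $\mathcal F$ with respect to $\|\cdot\|$, and $\int_{(L)}$ the unique $\|\cdot\|$-continuous linear extension of $I|_{\mathcal E'}$ to $\mathcal L^1_{(L)}$. *)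

From HB Require Import structures.
From mathcomp Require Import all_boot all_order all_algebra.
From mathcomp Require Import all_classical all_reals.
From mathcomp Require Import ereal topology normedtype sequences.
Set Implicit Arguments. Unset Strict Implicit. Unset Printing Implicit Defensive.
Import Order.TTheory GRing.Theory Num.Theory.
Import numFieldNormedType.Exports.
Local Open Scope classical_set_scope.
Local Open Scope ring_scope.

(* Paths S = (S_j)_{j in N_0} are sequences nat -> R; a trajectory set is a
   set Tr : set (nat -> R) (with S_0 = s0, stated as a hypothesis). *)

(* A simple portfolio (V, n, H): n in N = {1,2,...}; H_i nonanticipating,
   i.e. H_i(S) depends only on S_0,...,S_i. Only H_i for i < n matter. *)
Record sportf (R : realType) := SPortf {
  sp_V : R;
  sp_n : nat;
  sp_n_gt0 : (0 < sp_n)%N;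
  sp_H : nat -> (nat -> R) -> R;
  sp_nonanticipating : forall i (w w' : nat -> R),
      (forall k, (k <= i)%N -> w k = w' k) -> sp_H i w = sp_H i w' }.

Section Defs.
Variable R : realType.
Variable Tr : set (nat -> R).

Definition wealth (p : sportf R) (j : nat) (w : nat -> R) : R :=
  sp_V p + \sum_(0 <= i < minn j (sp_n p)) sp_H p i w * (w i.+1 - w i).

Definition wealth_inf (p : sportf R) (w : nat -> R) : R := wealth p (sp_n p) w.

Definition pos_sportf (p : sportf R) : Prop :=
  0 <= sp_V p /\ forall w, Tr w -> 0 <= wealth_inf p w.

Definition is_gen (P : nat -> sportf R) : Prop :=
  forall m, (0 < m)%N -> pos_sportf (P m).

Definition is_pos_gen (P : nat -> sportf R) : Prop :=
  is_gen P /\ forall j w, Tr w -> wealth (P 0%N) j w = 0.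

(* sum_{m>=0} Pi^{m}_infty(S) in (-oo,+oo] (terms m >= 1 are >= 0 on Tr) *)
Definition gen_value (P : nat -> sportf R) (w : nat -> R) : \bar R :=
  ((wealth_inf (P 0%N) w)%:E + \sum_(1 <= m <oo) (wealth_inf (P m) w)%:E)%E.

Definition endow (P : nat -> sportf R) : \bar R :=
  ((sp_V (P 0%N))%:E + \sum_(1 <= m <oo) (sp_V (P m))%:E)%E.

Definition superhedges (f : (nat -> R) -> \bar R) (P : nat -> sportf R) : Prop :=
  forall w, Tr w -> (f w <= gen_value P w)%E.

Definition Ibar (f : (nat -> R) -> \bar R) : \bar R :=
  ereal_inf [set V | exists P, is_pos_gen P /\ superhedges f P /\ V = endow P].

Definition sigma_bar (f : (nat -> R) -> \bar R) : \bar R :=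
  ereal_inf [set V | exists P, is_gen P /\ superhedges f P /\ V = endow P].

Definition normL (f : (nat -> R) -> R) : \bar R :=
  Ibar (fun w => (`|f w|)%:E).

Definition inE (e : (nat -> R) -> R) : Prop :=
  exists p : sportf R, forall w, Tr w -> e w = wealth_inf p w.

Definition inE' (e : (nat -> R) -> R) : Prop := inE e /\ (normL e < +oo)%E.

(* f in L^1_(L): closure of E' in F = {f real-valued, ||f|| < oo} *)
Definition inL1 (f : (nat -> R) -> R) : Prop :=
  (normL f < +oo)%E /\
  forall eps : R, 0 < eps ->
    exists e, inE' e /\ (normL (fun w => (f w - e w)%R) < eps%:E)%E.

(* I(Pi^{V,n,H}_infty) := V  (well defined when \bar sigma(0) >= 0) *)
Definition Ival (e : (nat -> R) -> R) : R :=
  xget (0 : R) [set V : R | exists p : sportf R,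
                    V = sp_V p /\ forall w, Tr w -> e w = wealth_inf p w].

(* \int_(L) f : the continuous extension of I|E' to L^1_(L), given by
   lim_k I(e_k) for any e_k in E' with ||f - e_k|| -> 0. *)
Definition intL (f : (nat -> R) -> R) : R :=
  xget (0 : R) [set c : R | exists e : nat -> (nat -> R) -> R,
     (forall k, inE' (e k)) /\
     ((fun k => normL (fun w => f w - e k w)) @ \oo --> (0 : \bar R)) /\
     ((fun k => Ival (e k)) @ \oo --> c)].

End Defs.

(* Everything rests on one consequence of sigma(0) >= 0: if g >= -Pi^{V,n,H}_oo on
   the trajectories, then -V <= \bar I(g), because adding (V,n,H) to the 0th
   component of a positive generalized portfolio superhedging g gives a
   generalized portfolio superhedging 0.  Applied to differences of simple
   portfolios this yields |V - V'| <= ||Pi - Pi'||, so I is well defined and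
   1-Lipschitz on E'.  Hence the values I(e_k) along e_k -> f in E' converge, to
   a limit independent of the approximating sequence, and linearity, positivity,
   continuity and normalisation pass from I to the limit. *)

From Pilot Require Import Defs.
From HB Require Import structures.
From mathcomp Require Import all_boot all_order all_algebra.
From mathcomp Require Import all_classical all_reals.
From mathcomp Require Import ereal topology normedtype sequences.
From mathcomp Require Import ring lra.
Import Order.TTheory GRing.Theory Num.Theory.
Import numFieldNormedType.Exports.
Set Implicit Arguments. Unset Strict Implicit.
Local Open Scope classical_set_scope.
Local Open Scope ring_scope.

Section SimplePortfolios.
Variable R : realType.
Implicit Types (p q : sportf R) (a b c : R) (w : nat -> R).

Lemma wealthE p j w : wealth p j w =
  sp_V p + \sum_(0 <= i < j) (if (i < sp_n p)%N then sp_H p i w else 0) * (w i.+1 - w i).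
Proof.
rewrite /wealth; congr (_ + _).
under [RHS]eq_bigr do rewrite (fun_if (fun h => h * _)) mul0r.
rewrite -big_mkcond /=; have [jn|nj] := leqP j (sp_n p).
  rewrite big_nat_cond [RHS]big_nat_cond; apply: eq_bigl => i.
  by rewrite andbT; case: ltnP => // ij; rewrite (leq_trans ij jn) andbT.
by rewrite (big_nat_widen _ _ _ _ _ (ltnW nj)).
Qed.

Lemma wealth_stopped p j w : (sp_n p <= j)%N -> wealth p j w = wealth_inf p w.
Proof. by move=> nj; rewrite /wealth_inf /wealth (minn_idPr nj) minnn. Qed.

Definition sportf_comb_H p q a b i w : R :=
  a * (if (i < sp_n p)%N then sp_H p i w else 0) +
  b * (if (i < sp_n q)%N then sp_H q i w else 0).

Lemma sportf_comb_H_nonanticipating p q a b i w w' :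
  (forall k, (k <= i)%N -> w k = w' k) ->
  sportf_comb_H p q a b i w = sportf_comb_H p q a b i w'.
Proof.
by move=> ww'; rewrite /sportf_comb_H (sp_nonanticipating p ww') (sp_nonanticipating q ww').
Qed.

Definition sportf_comb p q a b : sportf R :=
  @SPortf R (a * sp_V p + b * sp_V q) (maxn (sp_n p) (sp_n q))
    (leq_trans (sp_n_gt0 p) (leq_maxl _ _))
    (sportf_comb_H p q a b) (@sportf_comb_H_nonanticipating p q a b).

Definition sportf_cst c : sportf R :=
  @SPortf R c 1 isT (fun _ _ => 0) (fun _ _ _ _ => erefl).

Lemma wealth_comb p q a b j w :
  wealth (sportf_comb p q a b) j w = a * wealth p j w + b * wealth q j w.
Proof.
rewrite !wealthE /= !mulrDr [RHS]addrACA; congr (_ + _).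
rewrite !mulr_sumr -big_split; apply: eq_bigr => i _ /=.
rewrite /sportf_comb_H leq_max.
by case: (i < sp_n p)%N; case: (i < sp_n q)%N => /=; ring.
Qed.

Lemma wealth_inf_comb p q a b w :
  wealth_inf (sportf_comb p q a b) w = a * wealth_inf p w + b * wealth_inf q w.
Proof. by rewrite {1}/wealth_inf wealth_comb !wealth_stopped ?leq_maxl ?leq_maxr. Qed.

Lemma wealth_cst c j w : wealth (sportf_cst c) j w = c.
Proof. by rewrite /wealth big1 ?addr0 // => i _; rewrite mul0r. Qed.

Lemma wealth_inf_cst c w : wealth_inf (sportf_cst c) w = c.
Proof. exact: wealth_cst. Qed.

End SimplePortfolios.

Section GenSum.
Variable R : realType.
Implicit Types (x y : nat -> R) (a b c : R).

Definition gen_sum x : \bar R := ((x 0%N)%:E + \sum_(1 <= m <oo) (x m)%:E)%E.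

Lemma gen_sum_head x y c : x 0%N = c + y 0%N -> (forall m, (0 < m)%N -> x m = y m) ->
  gen_sum x = (c%:E + gen_sum y)%E.
Proof.
move=> x0 xy; rewrite /gen_sum x0 EFinD -addeA; congr (_ + (_ + _))%E.
by rewrite !ereal_series; apply: eq_eseriesr => m /xy ->.
Qed.

Lemma gen_sum_comb x y a b : 0 <= a -> 0 <= b ->
  (forall m, (0 < m)%N -> 0 <= x m) -> (forall m, (0 < m)%N -> 0 <= y m) ->
  gen_sum (fun m => a * x m + b * y m) = (a%:E * gen_sum x + b%:E * gen_sum y)%E.
Proof.
move=> a0 b0 x0 y0; rewrite /gen_sum.
under eq_eseriesr do rewrite EFinD !EFinM.
rewrite nneseriesD => [|m m1 _|m m1 _]; last 2 first.
- by rewrite mule_ge0 ?lee_fin ?x0.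
- by rewrite mule_ge0 ?lee_fin ?y0.
rewrite !ereal_series !nneseriesZl => [|m m1|m m1]; last 2 first.
- by rewrite lee_fin y0.
- by rewrite lee_fin x0.
by rewrite EFinD !EFinM !muleDr ?fin_num_adde_defr // addeACA.
Qed.

Lemma gen_sum_at1 c : 0 <= c -> gen_sum (fun m => if m is 1%N then c else 0) = c%:E.
Proof.
move=> c0; rewrite /gen_sum add0e (@nneseries_split _ _ 1 1).
  by rewrite big_nat1 eseries0 ?adde0 // => -[|[|m]].
by move=> [|[|m]] //= _; rewrite lee_fin.
Qed.

End GenSum.

Section GeneralizedPortfolios.
Variables (R : realType) (Tr : set (nat -> R)).
Implicit Types (P Q : nat -> sportf R) (p : sportf R) (a b c : R) (w : nat -> R).

Lemma gen_valueE P w : gen_value P w = gen_sum (fun m => wealth_inf (P m) w).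
Proof. by []. Qed.

Lemma endowE P : endow P = gen_sum (fun m => sp_V (P m)).
Proof. by []. Qed.

Definition gen_add0 P p : nat -> sportf R :=
  fun m => if m is 0%N then sportf_comb p (P 0%N) 1 1 else P m.

Definition gen_comb P Q a b : nat -> sportf R :=
  fun m => sportf_comb (P m) (Q m) a b.

(* Slot 0 of a positive generalized portfolio must have zero wealth, so the cash
   position is held in slot 1. *)
Definition gen_cst c : nat -> sportf R :=
  fun m => sportf_cst (if m is 1%N then c else 0).

Lemma is_gen_add0 P p : is_gen Tr P -> is_gen Tr (gen_add0 P p).
Proof. by move=> gP [|m] //; exact: gP. Qed.

Lemma gen_value_add0 P p w :
  gen_value (gen_add0 P p) w = ((wealth_inf p w)%:E + gen_value P w)%E.
Proof. by apply: gen_sum_head => [|[]//]; rewrite /= wealth_inf_comb !mul1r. Qed.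

Lemma endow_add0 P p : endow (gen_add0 P p) = ((sp_V p)%:E + endow P)%E.
Proof. by apply: gen_sum_head => [|[]//]; rewrite /= !mul1r. Qed.

Lemma is_pos_gen_comb P Q a b : 0 <= a -> 0 <= b ->
  is_pos_gen Tr P -> is_pos_gen Tr Q -> is_pos_gen Tr (gen_comb P Q a b).
Proof.
move=> a0 b0 [gP P0] [gQ Q0]; split=> [m m0|j w Trw].
  have [[VP PP] [VQ QQ]] := (gP m m0, gQ m m0).
  split=> [|w Trw]; first by rewrite /= addr_ge0 ?mulr_ge0.
  by rewrite wealth_inf_comb addr_ge0 ?mulr_ge0 ?PP ?QQ.
by rewrite wealth_comb P0 // Q0 // !mulr0 addr0.
Qed.

Lemma gen_value_comb P Q a b w : 0 <= a -> 0 <= b ->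
  is_gen Tr P -> is_gen Tr Q -> Tr w ->
  gen_value (gen_comb P Q a b) w = (a%:E * gen_value P w + b%:E * gen_value Q w)%E.
Proof.
move=> a0 b0 gP gQ Trw; rewrite !gen_valueE -gen_sum_comb //.
- by congr gen_sum; apply/funext => m; rewrite wealth_inf_comb.
- by move=> m /gP[_]; apply.
- by move=> m /gQ[_]; apply.
Qed.

Lemma endow_comb P Q a b : 0 <= a -> 0 <= b -> is_gen Tr P -> is_gen Tr Q ->
  endow (gen_comb P Q a b) = (a%:E * endow P + b%:E * endow Q)%E.
Proof.
move=> a0 b0 gP gQ; rewrite endowE gen_sum_comb //.
- by move=> m /gP[].
- by move=> m /gQ[].
Qed.

Lemma is_pos_gen_cst c : 0 <= c -> is_pos_gen Tr (gen_cst c).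
Proof.
move=> c0; split=> [[|[|m]] // _|j w _]; last exact: wealth_cst.
all: by split=> // w _; rewrite wealth_inf_cst.
Qed.

Lemma gen_value_cst c w : 0 <= c -> gen_value (gen_cst c) w = c%:E.
Proof.
move=> c0; rewrite gen_valueE -[RHS](gen_sum_at1 c0).
by congr gen_sum; apply/funext => m; rewrite wealth_inf_cst.
Qed.

Lemma endow_cst c : 0 <= c -> endow (gen_cst c) = c%:E.
Proof. exact: gen_sum_at1. Qed.

End GeneralizedPortfolios.

Section Seminorm.
Variables (R : realType) (Tr : set (nat -> R)).
Implicit Types (f g h : (nat -> R) -> R) (a b c x y : R).

Lemma normL_le_cst h c : 0 <= c -> (forall w, Tr w -> `|h w| <= c) ->
  (normL Tr h <= c%:E)%E.
Proof.
move=> c0 hc; rewrite -(endow_cst c0); apply: ereal_inf_lbound.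
exists (gen_cst c); split; first exact: is_pos_gen_cst.
by split=> // w Trw; rewrite gen_value_cst // lee_fin hc.
Qed.

Lemma normL_le_comb f g h a b x y : 0 <= a -> 0 <= b ->
  (normL Tr f < x%:E)%E -> (normL Tr g < y%:E)%E ->
  (forall w, Tr w -> `|h w| <= a * `|f w| + b * `|g w|) ->
  (normL Tr h <= (a * x + b * y)%:E)%E.
Proof.
move=> a0 b0 /ereal_inf_lt[_ [P [pP [fP ->]]] Px] /ereal_inf_lt[_ [Q [pQ [gQ ->]]] Qy].
move=> hfg; have [genP genQ] := (pP.1, pQ.1).
apply: (@le_trans _ _ (endow (gen_comb P Q a b))).
  apply: ereal_inf_lbound; exists (gen_comb P Q a b).
  split; first exact: is_pos_gen_comb.
  split=> // w Trw; rewrite (gen_value_comb a0 b0 genP genQ Trw).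
  apply: le_trans (leeD (lee_wpmul2l _ (fP w Trw)) (lee_wpmul2l _ (gQ w Trw)));
    by rewrite ?lee_fin ?hfg.
rewrite (endow_comb a0 b0 genP genQ) EFinD !EFinM.
by rewrite leeD // lee_wpmul2l ?lee_fin // ltW.
Qed.

Lemma normL_le_add f g h x y :
  (normL Tr f < x%:E)%E -> (normL Tr g < y%:E)%E ->
  (forall w, Tr w -> `|h w| <= `|f w| + `|g w|) ->
  (normL Tr h <= (x + y)%:E)%E.
Proof.
move=> fx gy hfg; rewrite -[x]mul1r -[y]mul1r.
by apply: normL_le_comb fx gy _ => // w /hfg; rewrite !mul1r.
Qed.

Lemma normL_lty_comb f g a b : (normL Tr f < +oo)%E -> (normL Tr g < +oo)%E ->
  (normL Tr (fun w => (a * f w + b * g w)%R) < +oo)%E.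
Proof.
have lty_EFin (z : \bar R) : (z < +oo)%E -> exists r : R, (z < r%:E)%E.
  case: z => [r _|//|_]; last by exists 0; rewrite ltNyr.
  by exists (r + 1); rewrite lte_fin ltrDl.
move=> /lty_EFin[x fx] /lty_EFin[y gy].
apply: le_lt_trans (normL_le_comb (normr_ge0 a) (normr_ge0 b) fx gy _) _; last exact: ltry.
by move=> w _; rewrite -!normrM ler_normD.
Qed.

End Seminorm.

Section Hedging.
Variables (R : realType) (Tr : set (nat -> R)).
Hypothesis sigma0_ge0 : (0 <= sigma_bar Tr (fun _ => 0%E))%E.
Implicit Types (f e : (nat -> R) -> R) (p q : sportf R) (a b c : R).

Lemma oppV_le_Ibar p (g : (nat -> R) -> \bar R) :
  (forall w, Tr w -> ((- wealth_inf p w)%:E <= g w)%E) -> ((- sp_V p)%:E <= Ibar Tr g)%E.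
Proof.
move=> pg; apply: le_ereal_inf_tmp => _ [P [[genP _] [gP ->]]].
have : (sigma_bar Tr (fun _ => 0%E) <= endow (gen_add0 P p))%E.
  apply: ereal_inf_lbound; exists (gen_add0 P p); split; first exact: is_gen_add0.
  split=> // w Trw; rewrite gen_value_add0 -[_%:E]oppeK addeC sube_ge0 ?fin_numN //.
  exact: le_trans (pg w Trw) (gP w Trw).
rewrite endow_add0 => /(le_trans sigma0_ge0).
by rewrite -[_%:E]oppeK addeC sube_ge0 ?fin_numN.
Qed.

Lemma Ibar_ge0 (g : (nat -> R) -> \bar R) : (forall w, Tr w -> (0 <= g w)%E) ->
  (0 <= Ibar Tr g)%E.
Proof.
move=> g0; rewrite -oppe0; apply: (oppV_le_Ibar (p := sportf_cst 0)) => w Trw.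
by rewrite wealth_inf_cst oppr0 g0.
Qed.

Lemma normL_ge0 f : (0 <= normL Tr f)%E.
Proof. by apply: Ibar_ge0 => w _; rewrite lee_fin. Qed.

Lemma normV_le_normL p f : (forall w, Tr w -> f w = wealth_inf p w) ->
  ((`|sp_V p|)%:E <= normL Tr f)%E.
Proof.
move=> fp; have le_normL q : (forall w, Tr w -> `|wealth_inf q w| = `|f w|) ->
    ((- sp_V q)%:E <= normL Tr f)%E.
  by move=> qf; apply: oppV_le_Ibar => w Trw; rewrite lee_fin -qf // -normrN ler_norm.
have NVp : ((- sp_V p)%:E <= normL Tr f)%E by apply: le_normL => w Trw; rewrite fp.
have : ((- sp_V (sportf_comb p p (-1) 0))%:E <= normL Tr f)%E.
  by apply: le_normL => w Trw; rewrite wealth_inf_comb fp // mul0r addr0 mulN1r normrN.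
rewrite /= mul0r addr0 mulN1r opprK.
case: (normL Tr f) (normL_ge0 f) NVp => [r _ | _ _ _ | //]; last exact: leey.
by rewrite !lee_fin ler_norml lerNl => -> ->.
Qed.

Lemma Ival_spec e : Defs.inE Tr e ->
  exists2 p, Ival Tr e = sp_V p & forall w, Tr w -> e w = wealth_inf p w.
Proof.
case=> p ep; have : [set V | exists p : sportf R,
    V = sp_V p /\ forall w, Tr w -> e w = wealth_inf p w] (Ival Tr e).
  by apply: xgetPex; exists (sp_V p), p.
by case=> q [-> eq]; exists q.
Qed.

Lemma distV_le_normL p q f :
  (forall w, Tr w -> f w = wealth_inf p w - wealth_inf q w) ->
  ((`|sp_V p - sp_V q|)%:E <= normL Tr f)%E.
Proof.
move=> fpq; have := @normV_le_normL (sportf_comb p q 1 (-1)) f.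
by rewrite /= mul1r mulN1r; apply=> w Trw; rewrite wealth_inf_comb mul1r mulN1r fpq.
Qed.

Lemma Ival_wealth e p : (forall w, Tr w -> e w = wealth_inf p w) -> Ival Tr e = sp_V p.
Proof.
move=> ep; have [q -> eq] := Ival_spec (ex_intro _ p ep).
apply/eqP; rewrite -subr_eq0 -normr_le0 -lee_fin.
apply: le_trans (distV_le_normL (f := fun=> 0%R) _) (normL_le_cst (lexx 0) _).
- by move=> w Trw; rewrite -eq // -ep // subrr.
- by move=> w _; rewrite normr0.
Qed.

Lemma Ival_dist e e' : Defs.inE Tr e -> Defs.inE Tr e' ->
  ((`|Ival Tr e - Ival Tr e'|)%:E <= normL Tr (fun w => (e w - e' w)%R))%E.
Proof.
move=> /Ival_spec[p -> ep] /Ival_spec[q -> eq].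
by apply: distV_le_normL => w Trw; rewrite ep ?eq.
Qed.

Lemma inE_comb e e' a b : Defs.inE Tr e -> Defs.inE Tr e' ->
  Defs.inE Tr (fun w => a * e w + b * e' w).
Proof.
by move=> [p ep] [q eq]; exists (sportf_comb p q a b) => w Trw; rewrite wealth_inf_comb ep ?eq.
Qed.

Lemma Ival_comb e e' a b : Defs.inE Tr e -> Defs.inE Tr e' ->
  Ival Tr (fun w => a * e w + b * e' w) = a * Ival Tr e + b * Ival Tr e'.
Proof.
move=> /Ival_spec[p -> ep] /Ival_spec[q -> eq].
by apply: Ival_wealth (sportf_comb p q a b) _ => w Trw; rewrite wealth_inf_comb ep ?eq.
Qed.

Lemma inE_cst c : Defs.inE Tr (fun=> c).
Proof. by exists (sportf_cst c) => w _; rewrite wealth_inf_cst. Qed.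

Lemma Ival_cst c : Ival Tr (fun=> c) = c.
Proof. by apply: Ival_wealth (sportf_cst c) _ => w _; rewrite wealth_inf_cst. Qed.

End Hedging.

Lemma closed_balls_meet (R : realType) (a r : nat -> R) :
  (forall j k, `|a j - a k| <= r j + r k) -> exists c, forall k, `|c - a k| <= r k.
Proof.
move=> ark; pose S := range (fun k => a k - r k).
have S_ub j : ubound S (a j + r j).
  by move=> _ [k _ <-]; have := ark k j; rewrite ler_norml => /andP[_]; lra.
have S0 : S !=set0 by exists (a 0%N - r 0%N), 0%N.
exists (sup S) => k; rewrite ler_norml; apply/andP; split.
- have : a k - r k <= sup S by apply: sup_upper_bound; [split; last exists (a k + r k) | exists k].
  lra.
- by have := ge_sup S0 (S_ub k); lra.
Qed.

Section Approximation.
Variables (R : realType) (Tr : set (nat -> R)).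
Hypothesis sigma0_ge0 : (0 <= sigma_bar Tr (fun _ => 0%E))%E.
Implicit Types (f g e : (nat -> R) -> R) (a b c d x : R).

Definition approx_value f c := forall eps, 0 < eps -> exists e, inE' Tr e /\
  (normL Tr (fun w => (f w - e w)%R) < eps%:E)%E /\ `|c - Ival Tr e| < eps.

Definition approx_seq_value f c := exists e : nat -> (nat -> R) -> R,
  (forall k, inE' Tr (e k)) /\
  ((fun k => normL Tr (fun w => f w - e k w)) @ \oo --> (0 : \bar R)) /\
  ((fun k => Ival Tr (e k)) @ \oo --> c).

Lemma approx_value_dist f g c d x : approx_value f c -> approx_value g d ->
  (normL Tr (fun w => (g w - f w)%R) < x%:E)%E -> `|d - c| <= x.
Proof.
move=> fc gd gfx; apply/ler_addgt0Pr => t t0; have t5 : 0 < t / 5 by rewrite divr_gt0.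
have [e [[Ee _] [fe ce]]] := fc _ t5; have [e' [[Ee' _] [ge' de']]] := gd _ t5.
have ge : (normL Tr (fun w => (g w - e w)%R) < (x + 2 * (t / 5))%:E)%E.
  apply: le_lt_trans (normL_le_add gfx fe _) _; last by rewrite lte_fin; lra.
  by move=> w _; exact: ler_distD.
have : (normL Tr (fun w => (e' w - e w)%R) <= (t / 5 + (x + 2 * (t / 5)))%:E)%E.
  by apply: normL_le_add ge' ge _ => w _; rewrite (distrC (g w)) ler_distD.
move/(le_trans (Ival_dist sigma0_ge0 Ee' Ee)); rewrite lee_fin => e'e.
have := ler_distD (Ival Tr e') d c; have := ler_distD (Ival Tr e) (Ival Tr e') c.
by rewrite distrC in ce; lra.
Qed.

Lemma approx_value_unique f c d : approx_value f c -> approx_value f d -> c = d.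
Proof.
move=> fc fd; apply/eqP; rewrite -subr_eq0 -normr_le0 distrC.
apply/ler_addgt0Pr => t t0; rewrite add0r; apply: approx_value_dist fc fd _.
apply: le_lt_trans (normL_le_cst (lexx 0) _) _; last by rewrite lte_fin.
by move=> w _; rewrite subrr normr0.
Qed.

Lemma approx_value_ge0 f c : (forall w, Tr w -> 0 <= f w) -> approx_value f c -> 0 <= c.
Proof.
move=> f0 fc; apply/ler_addgt0Pr => t t0; have t2 : 0 < t / 2 by rewrite divr_gt0.
have [e [[/Ival_spec[p Ie ep] _] [fe ce]]] := fc _ t2.
have : ((- sp_V p)%:E <= normL Tr (fun w => (f w - e w)%R))%E.
  apply: (oppV_le_Ibar sigma0_ge0) => w Trw; rewrite lee_fin -ep //.
  by apply: le_trans (ler_norm _); rewrite lerDr f0.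
move/le_lt_trans/(_ fe); rewrite lte_fin -Ie.
by move: ce; rewrite ltr_norml; lra.
Qed.

Lemma inE'_comb e e' a b : inE' Tr e -> inE' Tr e' -> inE' Tr (fun w => a * e w + b * e' w).
Proof. by move=> [Ee eN] [Ee' e'N]; split; [exact: inE_comb | exact: normL_lty_comb]. Qed.

Lemma approx_value_comb f g c d a b : approx_value f c -> approx_value g d ->
  approx_value (fun w => a * f w + b * g w) (a * c + b * d).
Proof.
move=> fc gd t t0; pose s := `|a| + `|b| + 1.
have s0 : 0 < s by rewrite /s ltr_pwDr // addr_ge0.
have ts0 : 0 < t / s by rewrite divr_gt0.
have ts : `|a| * (t / s) + `|b| * (t / s) < t.
  by rewrite -mulrDl mulrC -mulrA gtr_pMr // mulrC ltr_pdivrMr // mul1r /s ltrDl.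
have [e [Ee [fe ce]]] := fc _ ts0; have [e' [Ee' [ge' de']]] := gd _ ts0.
exists (fun w => a * e w + b * e' w); split; first exact: inE'_comb.
split.
- apply: le_lt_trans (normL_le_comb (normr_ge0 a) (normr_ge0 b) fe ge' _) _.
    move=> w _; have -> : a * f w + b * g w - (a * e w + b * e' w) =
                          a * (f w - e w) + b * (g w - e' w) by ring.
    by rewrite -!normrM ler_normD.
  by rewrite lte_fin.
- rewrite (Ival_comb sigma0_ge0 _ _ Ee.1 Ee'.1).
  have -> : a * c + b * d - (a * Ival Tr e + b * Ival Tr e') =
            a * (c - Ival Tr e) + b * (d - Ival Tr e') by ring.
  apply: le_lt_trans (ler_normD _ _) (le_lt_trans _ ts); rewrite !normrM.
  by rewrite lerD // ler_wpM2l // ltW.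
Qed.

Lemma inE'_cst c : inE' Tr (fun=> c).
Proof.
split; first exact: inE_cst.
by apply: le_lt_trans (normL_le_cst (normr_ge0 c) _) (ltry _) => w _.
Qed.

Lemma approx_value_cst c : approx_value (fun=> c) c.
Proof.
move=> t t0; exists (fun=> c); split; first exact: inE'_cst.
rewrite (Ival_cst sigma0_ge0) (subrr c) normr0; split=> //.
apply: le_lt_trans (normL_le_cst (lexx 0) _) _; last by rewrite lte_fin.
by move=> w _; rewrite normr0.
Qed.

Lemma inL1_approx_value f c : (normL Tr f < +oo)%E -> approx_value f c -> inL1 Tr f.
Proof. by move=> fN fc; split=> // t /fc[e [Ee [fe _]]]; exists e. Qed.

Lemma approx_value_seq f c : approx_seq_value f c -> approx_value f c.
Proof.
move=> [e [Ee [/fine_cvgP[efin /cvgr_lt efine] /cvgrPdist_lt Iec]]] t t0.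
have /filter_ex[k [kfin kN kI]] : \forall k \near \oo,
    [/\ normL Tr (fun w => (f w - e k w)%R) \is a fin_num,
        fine (normL Tr (fun w => (f w - e k w)%R)) < t & `|c - Ival Tr (e k)| < t].
  by near=> k; split; near: k; [exact: efin | exact: efine | exact: Iec].
by exists (e k); rewrite -(fineK kfin) lte_fin.
Unshelve. all: by end_near.
Qed.

Lemma approx_seq_value_ex f : inL1 Tr f -> exists c, approx_seq_value f c.
Proof.
move=> [_ fE]; have [e eP] := choice (fun k => fE _ (harmonic_gt0 k)).
have Ie_dist j k : `|Ival Tr (e j) - Ival Tr (e k)| <= harmonic j + harmonic k.
  rewrite -lee_fin.
  apply: le_trans (Ival_dist sigma0_ge0 (eP j).1.1 (eP k).1.1) _.
  apply: normL_le_add (eP j).2 (eP k).2 _ => w _.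
  by rewrite (distrC (f w)) ler_distD.
have [c ce] := closed_balls_meet Ie_dist.
exists c, e; split; first by move=> k; exact: (eP k).1.
split.
- apply: (@squeeze_cvge _ _ _ _ (cst 0%E) _ (EFin \o harmonic)).
  + by apply: nearW => k; rewrite /= (normL_ge0 sigma0_ge0) (ltW (eP k).2).
  + exact: cvg_cst.
  + exact: cvge_harmonic.
- apply/cvgrPdist_le => t t0; have /cvgrPdist_le/(_ t t0) := @cvg_harmonic R.
  apply: filterS => k; rewrite sub0r normrN ger0_norm ?harmonic_ge0 // => hk.
  exact: le_trans (ce k) hk.
Qed.

Lemma approx_value_intL f : inL1 Tr f -> approx_value f (intL Tr f).
Proof.
move=> /approx_seq_value_ex[c fc]; apply: approx_value_seq.
by apply: (@xgetPex _ 0 (approx_seq_value f)); exists c.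
Qed.

End Approximation.

Unset Implicit Arguments.

Theorem proposition3p4 (R : realType) (s0 : R) (Tr : set (nat -> R)) :
  (forall w, Tr w -> w 0%N = s0) ->
  (0 <= sigma_bar Tr (fun _ => 0%E))%E ->
  [/\ (* linear *)
      (forall (f g : (nat -> R) -> R) (a b : R),
         inL1 Tr f -> inL1 Tr g ->
         inL1 Tr (fun w => a * f w + b * g w) /\
         intL Tr (fun w => a * f w + b * g w) = a * intL Tr f + b * intL Tr g),
      (* positive *)
      (forall f, inL1 Tr f -> (forall w, Tr w -> 0 <= f w) -> 0 <= intL Tr f),
      (* continuous w.r.t. ||.|| *)
      (forall f, inL1 Tr f -> forall eps : R, 0 < eps ->
         exists2 delta : R, 0 < delta &
           forall g, inL1 Tr g -> (normL Tr (fun w => (g w - f w)%R) < delta%:E)%E ->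
             `|intL Tr g - intL Tr f| < eps) &
      (* constant-preserving *)
      (forall c : R, inL1 Tr (fun _ => c) /\ intL Tr (fun _ => c) = c)].
Proof.
move=> _ sigma0_ge0; have intL_approx := approx_value_intL sigma0_ge0.
split.
- move=> f g a b fL gL.
  have fg := approx_value_comb sigma0_ge0 a b (intL_approx _ fL) (intL_approx _ gL).
  have fgL := inL1_approx_value (normL_lty_comb a b fL.1 gL.1) fg.
  by split=> //; apply: (approx_value_unique sigma0_ge0 (intL_approx _ fgL)).
- by move=> f fL f0; apply: (approx_value_ge0 sigma0_ge0 f0); exact: intL_approx.
- move=> f fL eps eps0; exists (eps / 2); first by rewrite divr_gt0.
  move=> g gL gf; apply: le_lt_trans (approx_value_dist sigma0_ge0 _ _ gf) _.
  + exact: intL_approx.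
  + exact: intL_approx.
  + by rewrite ltr_pdivrMr // ltr_pMr // ltr1n.
- move=> c; have cc := approx_value_cst sigma0_ge0 c.
  have cL := inL1_approx_value (inE'_cst Tr c).2 cc.
  by split=> //; apply: (approx_value_unique sigma0_ge0 (intL_approx _ cL)).
Qed.
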